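(* Let $\ell_v$ be a vertical line and $\ell_h$ a horizontal line, and let $\mathcal L$ be a finite family of L-frames, all of the same type, each of which intersects both $\ell_v$ and $\ell_h$. Then the intersection graph of $\mathcal L$ is a permutation graph; more precisely, taking the order in which the L-frames cross $\ell_v$ and the order in which they cross $\ell_h$ gives two orderings of $\mathcal L$ such that two L-frames intersect iff they appear in different relative order in the two orderings.
   Context: An L-frame is the union of a closed horizontal segment and a closed vertical segment sharing an endpoint (the corner); its type is determined by which directions (left/right, up/down) the two segments extend from the corner. A graph is a permutation graph if its vertices can be placed on two parallel lines so that, joining each vertex's two copies by a segment, two vertices are adjacent iff their segments cross (equivalently, iff they appear in different relative order on the two lines). Intersection graphs join two objects iff they intersect. *)

From HB Require Import structures.
From mathcomp Require Import all_boot all_order all_algebra all_fingroup.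
Set Implicit Arguments. Unset Strict Implicit. Unset Printing Implicit Defensive.
Import Order.TTheory GRing.Theory Num.Theory.
Local Open Scope ring_scope.

(* An L-frame: corner (lf_cx, lf_cy); a horizontal segment of length lf_h
   going right (lf_right = true) or left from the corner, and a vertical
   segment of length lf_v going up (lf_up = true) or down from the corner. *)
Record Lframe (R : realFieldType) := MkLframe {
  lf_cx : R; lf_cy : R; lf_h : R; lf_v : R; lf_right : bool; lf_up : bool }.

Definition Lframe_wf (R : realFieldType) (L : Lframe R) : Prop :=
  0 < lf_h L /\ 0 < lf_v L.

Definition Ltype (R : realFieldType) (L : Lframe R) : bool * bool :=
  (lf_right L, lf_up L).

Definition on_harm (R : realFieldType) (L : Lframe R) (p : R * R) : bool :=
  (p.2 == lf_cy L) &&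
  (if lf_right L then (lf_cx L <= p.1) && (p.1 <= lf_cx L + lf_h L)
   else (lf_cx L - lf_h L <= p.1) && (p.1 <= lf_cx L)).

Definition on_varm (R : realFieldType) (L : Lframe R) (p : R * R) : bool :=
  (p.1 == lf_cx L) &&
  (if lf_up L then (lf_cy L <= p.2) && (p.2 <= lf_cy L + lf_v L)
   else (lf_cy L - lf_v L <= p.2) && (p.2 <= lf_cy L)).

Definition on_Lframe (R : realFieldType) (L : Lframe R) (p : R * R) : bool :=
  on_harm L p || on_varm L p.

Definition Lframes_meet (R : realFieldType) (L1 L2 : Lframe R) : Prop :=
  exists p : R * R, on_Lframe L1 p && on_Lframe L2 p.

Definition meets_vline (R : realFieldType) (L : Lframe R) (x0 : R) : Prop :=
  exists y : R, on_Lframe L (x0, y).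
Definition meets_hline (R : realFieldType) (L : Lframe R) (y0 : R) : Prop :=
  exists x : R, on_Lframe L (x, y0).

(* [o] orders the frames consistently with the order in which they cross the
   vertical line x = x0, read in direction [up] (bottom-to-top if up = true,
   top-to-bottom otherwise): whenever the whole crossing of frame i lies
   strictly before the whole crossing of frame j along the line, i comes
   before j in o. *)
Definition follows_vline (R : realFieldType) (n : nat) (F : 'I_n -> Lframe R)
    (x0 : R) (up : bool) (o : {perm 'I_n}) : Prop :=
  forall i j : 'I_n,
    (forall y y' : R, on_Lframe (F i) (x0, y) -> on_Lframe (F j) (x0, y') ->
       if up then y < y' else y' < y) ->
    (o i < o j)%N.

Definition follows_hline (R : realFieldType) (n : nat) (F : 'I_n -> Lframe R)
    (y0 : R) (right : bool) (o : {perm 'I_n}) : Prop :=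
  forall i j : 'I_n,
    (forall x x' : R, on_Lframe (F i) (x, y0) -> on_Lframe (F j) (x', y0) ->
       if right then x < x' else x' < x) ->
    (o i < o j)%N.

(* Reflecting the axes so that every frame is of type right/up, a frame is
   determined (for intersection purposes) by its corner (a, b): since it
   crosses both lines, its horizontal arm reaches x0 and its vertical arm
   reaches y0, so two such frames meet iff their corners are weakly
   anti-ordered, i.e. a <= a' and b' <= b or the other way round.  Along the
   vertical line the frames appear in the order of b, along the horizontal
   line in the order of a; breaking ties lexicographically (by -a, resp. -b,
   and then by an index taken in opposite directions) yields two strict total
   orders that disagree on a pair exactly when its corners are weakly
   anti-ordered. *)
From HB Require Import structures.
From mathcomp Require Import all_boot all_order all_algebra all_fingroup.
From mathcomp Require Import lra.
Set Implicit Arguments. Unset Strict Implicit. Unset Printing Implicit Defensive.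
Import Order.TTheory GRing.Theory Num.Theory.
Local Open Scope ring_scope.

Section Ranking.
Variables (d : Order.disp_t) (T : orderType d) (n : nat) (f : 'I_n -> T).
Hypothesis f_inj : injective f.

Definition rank (i : 'I_n) : nat := #|[pred k | (f k < f i)%O]|.

Lemma rank_lt (i : 'I_n) : (rank i < n)%N.
Proof.
rewrite -[X in (_ < X)%N]card_ord; apply/proper_card/properP.
by split; [apply/subsetP | exists i; rewrite !inE ?ltxx].
Qed.

Lemma ltn_rank_of_lt {i j : 'I_n} : (f i < f j)%O -> (rank i < rank j)%N.
Proof.
move=> lt_ij; apply/proper_card/properP; split.
  by apply/subsetP => k; rewrite !inE => /lt_trans; apply.
by exists i; rewrite !inE ?ltxx.
Qed.

Lemma ltn_rank (i j : 'I_n) : (rank i < rank j)%N = (f i < f j)%O.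
Proof.
apply/idP/idP => [lt_ij|]; last exact: ltn_rank_of_lt.
case: (ltgtP (f i) (f j)) => // [/ltn_rank_of_lt|/f_inj eq_ij].
  by rewrite ltnNge (ltnW lt_ij).
by rewrite eq_ij ltnn in lt_ij.
Qed.

Lemma exists_perm_ranking :
  exists s : {perm 'I_n}, forall i j, (s i < s j)%N = (f i < f j)%O.
Proof.
have rank_inj : injective (fun i => Ordinal (rank_lt i)).
  move=> i j /(congr1 val) /= eq_rank; apply/f_inj/eqP.
  by rewrite eq_le !leNgt -(ltn_rank i j) -(ltn_rank j i) eq_rank ltnn.
by exists (perm rank_inj) => i j; rewrite !permE ltn_rank.
Qed.

End Ranking.

Section Lexi3.
Variable R : realFieldType.

Definition lexi3 (a b c : R) : (R *l R) *l R := (a, b, c).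

Lemma lt_lexi3 (a b c a' b' c' : R) : (lexi3 a b c < lexi3 a' b' c')%O =
  (a < a') || (a == a') && ((b < b') || (b == b') && (c < c')).
Proof.
rewrite /lexi3 ltEprodlexi !leEprodlexi /=.
by case: (ltgtP a a'); case: (ltgtP b b'); case: (ltgtP c c').
Qed.

Lemma lexi3_inj3 (a b c a' b' c' : R) : lexi3 a b c = lexi3 a' b' c' -> c = c'.
Proof. by case. Qed.

Lemma weakly_antiordered_lexi3 (a a' b b' c c' : R) : c != c' ->
  (a <= a' /\ b' <= b \/ a' <= a /\ b <= b') <->
  ((lexi3 b (- a) c < lexi3 b' (- a') c')%O !=
   (lexi3 a (- b) (- c) < lexi3 a' (- b') (- c'))%O).
Proof.
move=> ne_cc'; rewrite !lt_lexi3 !eqr_opp !ltrN2.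
case: (ltgtP c c') ne_cc' => //= _ _;
by case: (ltgtP a a'); case: (ltgtP b b') => //=; intuition.
Qed.

End Lexi3.

Section Frames.
Variable R : realFieldType.
Implicit Types (L : Lframe R) (x y : R).

Definition orient (b : bool) x : R := if b then x else - x.

Lemma ltr_orient b x y : (orient b x < orient b y) = if b then x < y else y < x.
Proof. by case: b; rewrite /orient ?ltrN2. Qed.

(* Corner coordinates after reflecting the frame to type right/up. *)
Definition ocx L := orient (lf_right L) (lf_cx L).
Definition ocy L := orient (lf_up L) (lf_cy L).

Lemma on_harm_orient L p : on_harm L p =
  (p.2 == lf_cy L) && (ocx L <= orient (lf_right L) p.1 <= ocx L + lf_h L).
Proof.
rewrite /on_harm /ocx /orient; case: (lf_right L) => //; congr (_ && _).
rewrite andbC lerN2; congr (_ && _); apply/idP/idP => ?; lra.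
Qed.

Lemma on_varm_orient L p : on_varm L p =
  (p.1 == lf_cx L) && (ocy L <= orient (lf_up L) p.2 <= ocy L + lf_v L).
Proof.
rewrite /on_varm /ocy /orient; case: (lf_up L) => //; congr (_ && _).
rewrite andbC lerN2; congr (_ && _); apply/idP/idP => ?; lra.
Qed.

Definition spans L x0 y0 :=
  (ocx L <= orient (lf_right L) x0 <= ocx L + lf_h L) &&
  (ocy L <= orient (lf_up L) y0 <= ocy L + lf_v L).

Lemma spans_of_meets L x0 y0 : Lframe_wf L ->
  meets_vline L x0 -> meets_hline L y0 -> spans L x0 y0.
Proof.
case=> h_gt0 v_gt0 [y on_y] [x on_x].
rewrite /on_Lframe !on_harm_orient !on_varm_orient /= in on_x on_y.
apply/andP; split.
  case/orP: on_y => [/andP[_ ->] // | /andP[/eqP/= -> _]].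
  by rewrite /ocx lexx lerDl ltW.
case/orP: on_x => [/andP[/eqP/= -> _] | /andP[_ ->] //].
by rewrite /ocy lexx lerDl ltW.
Qed.

Lemma on_Lframe_vline L x0 y0 : spans L x0 y0 -> on_Lframe L (x0, lf_cy L).
Proof. by case/andP=> x0_in _; rewrite /on_Lframe on_harm_orient eqxx x0_in. Qed.

Lemma on_Lframe_hline L x0 y0 : spans L x0 y0 -> on_Lframe L (lf_cx L, y0).
Proof. by case/andP=> _ y0_in; rewrite /on_Lframe on_varm_orient eqxx y0_in orbT. Qed.

Lemma Lframes_meetE L1 L2 x0 y0 : Ltype L1 = Ltype L2 ->
  spans L1 x0 y0 -> spans L2 x0 y0 ->
  Lframes_meet L1 L2 <->
  (ocx L1 <= ocx L2 /\ ocy L2 <= ocy L1 \/ ocx L2 <= ocx L1 /\ ocy L1 <= ocy L2).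
Proof.
case=> eq_r eq_u; rewrite /spans /ocx /ocy -eq_r -eq_u.
case/andP=> /andP[cx1_x0 x0_h1] /andP[cy1_y0 y0_v1].
case/andP=> /andP[cx2_x0 x0_h2] /andP[cy2_y0 y0_v2].
split=> [[p /andP[]] | [[le_x le_y] | [le_x le_y]]].
- rewrite /on_Lframe !on_harm_orient !on_varm_orient /ocx /ocy -eq_r -eq_u.
  case/orP=> /and3P[/eqP e1 a1 a2]; case/orP=> /and3P[/eqP e2 b1 b2];
    rewrite -e1 -e2.
  + by case/orP: (le_total (orient (lf_right L1) (lf_cx L1))
                            (orient (lf_right L1) (lf_cx L2)));
      [left | right]; rewrite lexx.
  + by left.
  + by right.
  + by case/orP: (le_total (orient (lf_up L1) (lf_cy L1))
                            (orient (lf_up L1) (lf_cy L2)));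
      [right | left]; rewrite lexx.
- exists (lf_cx L2, lf_cy L1); rewrite /on_Lframe !on_harm_orient !on_varm_orient.
  rewrite /ocx /ocy -eq_r -eq_u /= !eqxx le_x le_y /=.
  by rewrite (le_trans cx2_x0 x0_h1) (le_trans cy1_y0 y0_v2) orbT.
- exists (lf_cx L1, lf_cy L2); rewrite /on_Lframe !on_harm_orient !on_varm_orient.
  rewrite /ocx /ocy -eq_r -eq_u /= !eqxx le_x le_y /=.
  by rewrite (le_trans cx1_x0 x0_h2) (le_trans cy2_y0 y0_v1) orbT.
Qed.

End Frames.

Theorem mainTheorem11 (R : realFieldType) (x0 y0 : R) (n : nat)
    (F : 'I_n -> Lframe R) (t : bool * bool) :
  (forall i, Lframe_wf (F i)) ->
  (forall i, Ltype (F i) = t) ->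
  (forall i, meets_vline (F i) x0) ->
  (forall i, meets_hline (F i) y0) ->
  exists (sv sh : {perm 'I_n}) (up right : bool),
    [/\ follows_vline F x0 up sv,
        follows_hline F y0 right sh &
        forall i j : 'I_n, i != j ->
          (Lframes_meet (F i) (F j) <->
           ((sv i < sv j)%N != (sh i < sh j)%N))].
Proof.
case: t => r u wf ty mv mh.
have span i : spans (F i) x0 y0 by apply: spans_of_meets.
have Fr i : lf_right (F i) = r := congr1 fst (ty i).
have Fu i : lf_up (F i) = u := congr1 snd (ty i).
pose tag (i : 'I_n) : R := (val i)%:R.
have tag_inj : injective tag by move=> i j /eqP; rewrite eqr_nat => /eqP/val_inj.
pose vkey i := lexi3 (ocy (F i)) (- ocx (F i)) (tag i).
pose hkey i := lexi3 (ocx (F i)) (- ocy (F i)) (- tag i).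
have [sv svE] : exists sv : {perm 'I_n},
    forall i j, (sv i < sv j)%N = (vkey i < vkey j)%O.
  by apply: exists_perm_ranking => i j /lexi3_inj3/tag_inj.
have [sh shE] : exists sh : {perm 'I_n},
    forall i j, (sh i < sh j)%N = (hkey i < hkey j)%O.
  by apply: exists_perm_ranking => i j /lexi3_inj3/oppr_inj/tag_inj.
exists sv, sh, u, r; split=> i j.
- move=> before; rewrite svE lt_lexi3 /ocy !Fu ltr_orient.
  by rewrite before ?(on_Lframe_vline (span _)).
- move=> before; rewrite shE lt_lexi3 /ocx !Fr ltr_orient.
  by rewrite before ?(on_Lframe_hline (span _)).
move=> ne_ij; rewrite svE shE (Lframes_meetE _ (span i) (span j)) ?ty //.
by apply: weakly_antiordered_lexi3; rewrite /tag eqr_nat.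
Qed.
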